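(* Let $\iota:\emptyset\to\{\bullet\}$; let $q:\{\bullet_1,\bullet_2\}\to\{\bullet\}$ be the map from the two-point discrete space to a point; let $m:\{a\}\to\{a,b\}$ be the inclusion of a point into the two-point antidiscrete space; and let $\tau:S\to\{a,b\}$ be the identity-on-points map from the Sierpinski space $S=\{a,b\}$ (open sets $\emptyset,\{a\},S$) to the antidiscrete space on $\{a,b\}$. Then, in $\mathrm{Top}$, $\{\iota\}^{lrrrl}=\{m,\tau\}^l=\{q\}^{rl}$, and this is the class of quotient maps, i.e. surjective continuous maps $p:A\to B$ such that $B$ carries the quotient topology (a subset $V\subseteq B$ is open iff $p^{-1}(V)$ is open).
   Context: For continuous maps $f:A\to B$, $g:C\to D$, $f\pitchfork g$ means: for all continuous $t:A\to C$, $b:B\to D$ with $g\circ t=b\circ f$ there is continuous $d:B\to C$ with $d\circ f=t$, $g\circ d=b$. For a class $P$, $P^l=\{f: f\pitchfork g\ \forall g\in P\}$, $P^r=\{g: f\pitchfork g\ \forall f\in P\}$; for a word $w$ in $l,r$, $P^w$ applies these operations from left to right. *)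

From HB Require Import structures.
From mathcomp Require Import all_boot all_order.
From mathcomp Require Import boolp classical_sets topology.
Set Implicit Arguments. Unset Strict Implicit. Unset Printing Implicit Defensive.
Local Open Scope classical_set_scope.

Definition mclass := forall (A B : topologicalType), (A -> B) -> Prop.

Definition lifts (A B C D : topologicalType) (f : A -> B) (g : C -> D) : Prop :=
  forall (t : A -> C) (b : B -> D), continuous t -> continuous b ->
    g \o t = b \o f ->
    exists d : B -> C, [/\ continuous d, d \o f = t & g \o d = b].

Definition lorth (P : mclass) : mclass := fun A B f =>
  continuous f /\ forall (C D : topologicalType) (g : C -> D), P C D g -> lifts f g.
Definition rorth (P : mclass) : mclass := fun C D g =>
  continuous g /\ forall (A B : topologicalType) (f : A -> B), P A B f -> lifts f g.

Definition sing (A0 B0 : topologicalType) (f0 : A0 -> B0) : mclass :=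
  fun A B f => existT (fun AB : topologicalType * topologicalType => AB.1 -> AB.2)
                      (A, B) f
             = existT (fun AB : topologicalType * topologicalType => AB.1 -> AB.2)
                      (A0, B0) f0.
Definition union2 (P Q : mclass) : mclass := fun A B f => P A B f \/ Q A B f.

Definition emptysp : topologicalType := discrete_topology void.
Definition pointsp : topologicalType := discrete_topology unit.
Definition twodisc : topologicalType := discrete_topology bool.

(* the two-point antidiscrete space {a,b}, with a = true, b = false *)
Definition antidisc : Type := bool.
HB.instance Definition _ := Choice.copy antidisc bool.
Definition antidisc_op (A : set antidisc) : Prop := A true <-> A false.
Lemma antidisc_opT : antidisc_op setT. Proof. by []. Qed.
Lemma antidisc_opI : setI_closed antidisc_op.
Proof. by move=> A B HA HB; split=> -[Ha Hb]; split; (apply/HA || apply/HB). Qed.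
Lemma antidisc_opU (I : Type) (f : I -> set antidisc) :
  (forall i, antidisc_op (f i)) -> antidisc_op (\bigcup_i f i).
Proof. by move=> H; split=> -[i _ /(H i) ?]; exists i. Qed.
HB.instance Definition _ := isOpenTopological.Build antidisc
  antidisc_opT antidisc_opI antidisc_opU.

(* the Sierpinski space S = {a,b} with open sets ∅, {a}, S (a = true) *)
Definition sierp : Type := bool.
HB.instance Definition _ := Choice.copy sierp bool.
Definition sierp_op (A : set sierp) : Prop := A false -> A true.
Lemma sierp_opT : sierp_op setT. Proof. by []. Qed.
Lemma sierp_opI : setI_closed sierp_op.
Proof. by move=> A B HA HB [/HA ? /HB ?]. Qed.
Lemma sierp_opU (I : Type) (f : I -> set sierp) :
  (forall i, sierp_op (f i)) -> sierp_op (\bigcup_i f i).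
Proof. by move=> H [i _ /(H i) ?]; exists i. Qed.
HB.instance Definition _ := isOpenTopological.Build sierp
  sierp_opT sierp_opI sierp_opU.

Definition iotamap : emptysp -> pointsp := fun x => match x with end.
Definition qmap : twodisc -> pointsp := fun _ => tt.
Definition mmap : pointsp -> antidisc := fun _ => true.
Definition tau : sierp -> antidisc := fun x => x.

Definition quotient_map (A B : topologicalType) (p : A -> B) : Prop :=
  [/\ continuous p, (forall y : B, exists x : A, p x = y) &
      forall V : set B, open V <-> open (p @^-1` V)].

Lemma sierp_openE (U : set sierp) :
  open U <-> [\/ U = set0, U = [set true] | U = setT].
Proof.
change (sierp_op U <-> [\/ U = set0, U = [set true] | U = setT]).
split.
- move=> H; case: (pselect (U true)) => Ht; case: (pselect (U false)) => Hf.
  + apply: Or33; apply/seteqP; split=> // -[]//.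
  + apply: Or32; apply/seteqP; split=> -[]//= _; exact: Ht.
  + by exfalso; exact/Ht/H.
  + apply: Or31; apply/seteqP; split=> -[]//.
- by case=> ->; rewrite /sierp_op //=.
Qed.
Lemma antidisc_openE (U : set antidisc) : open U <-> U = set0 \/ U = setT.
Proof.
change (antidisc_op U <-> U = set0 \/ U = setT).
split.
- move=> [H1 H2]; case: (pselect (U true)) => Ht.
  + by right; apply/seteqP; split=> // -[] _ //; exact: H1.
  + by left; apply/seteqP; split=> // -[] // /H2.
- by case=> ->.
Qed.
Arguments lorth P A B f : clear implicits.
Arguments rorth P A B f : clear implicits, rename.
Arguments sing {A0 B0} f0 A B f.
Arguments union2 P Q A B f : clear implicits.

(* Each of the three classes is the left orthogonal of a class of continuous
   maps that contains m and tau and consists of injective maps.  Lifting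
   against m forces surjectivity, and lifting against tau the indicator of a
   set V with open preimage (a map into the Sierpinski space) shows that V is
   open; conversely a quotient map lifts against any injection, the lift being
   the induced map on the quotient.  {q}^r is exactly the class of continuous
   injections.  So is {iota}^lrrr: a map of {iota}^lr with nonempty domain lies
   in {iota}^l, hence lifts against itself and has a continuous retraction,
   which puts q in {iota}^lrr; and a map of {iota}^lrr lifts against the empty
   map into its codomain, hence has a continuous section, and split
   epimorphisms lift against every injection. *)

From mathcomp Require Import all_boot all_order.
From mathcomp Require Import boolp classical_sets topology.
Set Implicit Arguments. Unset Strict Implicit. Unset Printing Implicit Defensive.
Local Open Scope classical_set_scope.

Lemma continuous_compose (R S T : topologicalType) (f : R -> S) (g : S -> T) :
  continuous f -> continuous g -> continuous (g \o f).
Proof. by move=> fc gc x; apply: continuous_comp; [exact: fc | exact: gc]. Qed.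

Lemma continuous_idfun (T : topologicalType) : continuous (@id T).
Proof. by apply/continuousP. Qed.

Lemma discrete_topology_continuous (X : choiceType) (T : topologicalType)
    (f : discrete_topology X -> T) :
  continuous f.
Proof. by apply/continuousP => U _; exact: discrete_open. Qed.

Lemma antidisc_continuous (T : topologicalType) (f : T -> antidisc) :
  continuous f.
Proof.
apply/continuousP => U /antidisc_openE [->|->].
- by rewrite preimage_set0; exact: open0.
- by rewrite preimage_setT; exact: openT.
Qed.

Lemma sierp_indicator_continuous (T : topologicalType) (U : set T) :
  open U -> continuous (fun x => `[< U x >] : sierp).
Proof.
move=> oU; apply/continuousP => W /sierp_openE [->|->|->].
- by rewrite preimage_set0; exact: open0.
- suff -> : (fun x => `[< U x >] : sierp) @^-1` [set true] = U by [].
  by apply/seteqP; split=> x /= /asboolP.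
- by rewrite preimage_setT; exact: openT.
Qed.

Lemma singW (A0 B0 : topologicalType) (f0 : A0 -> B0) (P : mclass) :
  P A0 B0 f0 -> forall C D g, sing f0 C D g -> P C D g.
Proof.
move=> Pf0 C D g e.
pose P' (s : {AB : topologicalType * topologicalType & AB.1 -> AB.2}) :=
  P (projT1 s).1 (projT1 s).2 (projT2 s).
by change (P' (existT _ (C, D) g)); rewrite e.
Qed.

Lemma lorth_singE (A0 B0 A B : topologicalType) (f0 : A0 -> B0) (f : A -> B) :
  lorth (sing f0) A B f <-> continuous f /\ lifts f f0.
Proof.
split=> -[fc H]; split=> //; first exact: H.
exact: (singW (P := fun C D g => lifts f g)).
Qed.

Lemma rorth_singE (A0 B0 C D : topologicalType) (f0 : A0 -> B0) (g : C -> D) :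
  rorth (sing f0) C D g <-> continuous g /\ lifts f0 g.
Proof.
split=> -[gc H]; split=> //; first exact: H.
exact: (singW (P := fun A B f => lifts f g)).
Qed.

Section LiftingAgainstInjections.
Variables (C D : topologicalType) (h : C -> D).

Lemma lifts_qmapE : lifts qmap h <-> injective h.
Proof.
split=> [H x1 x2 hx12 | hinj t b _ _ sq].
- have [|d [_ dq _]] := H (fun i : twodisc => if i then x1 else x2)
    (fun _ => h x1) (@discrete_topology_continuous _ _ _) (@cst_continuous _ _ _).
    by apply/funext => -[].
  by rewrite -[x1](congr1 (@^~ true) dq) -[x2](congr1 (@^~ false) dq).
- have hsq i : h (t i) = b tt by exact: (congr1 (@^~ i) sq).
  exists (fun _ => t true); split; first exact: cst_continuous.
  + by apply/funext => i; apply: hinj; rewrite /= !hsq.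
  + by apply/funext => -[]; rewrite /= hsq.
Qed.

Lemma quotient_map_lifts (A B : topologicalType) (f : A -> B) :
  quotient_map f -> injective h -> lifts f h.
Proof.
move=> [_ fsurj fopen] hinj t b tc _ sq.
have [s fsK] := choice fsurj.
have hsq x : h (t x) = b (f x) by exact: (congr1 (@^~ x) sq).
have tsf : t \o s \o f = t by apply/funext => x /=; apply: hinj; rewrite !hsq fsK.
exists (t \o s); split=> //.
- apply/continuousP => U oU; apply/fopen.
  by rewrite -comp_preimage tsf; exact: (continuousP _).1 tc _ oU.
- by apply/funext => y /=; rewrite hsq fsK.
Qed.

Lemma section_lifts (A B : topologicalType) (f : A -> B) (s : B -> A) :
  continuous s -> f \o s = id -> injective h -> lifts f h.
Proof.
move=> sc fs hinj t b tc _ sq.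
have hsq x : h (t x) = b (f x) by exact: (congr1 (@^~ x) sq).
have fsK y : f (s y) = y by exact: (congr1 (@^~ y) fs).
exists (t \o s); split; first exact: continuous_compose.
- by apply/funext => x /=; apply: hinj; rewrite !hsq fsK.
- by apply/funext => y /=; rewrite hsq fsK.
Qed.

End LiftingAgainstInjections.

Lemma mmap_injective : injective mmap. Proof. by move=> [] []. Qed.

Lemma tau_injective : injective tau. Proof. by []. Qed.

Section LiftingAgainstMmapTau.
Variables (A B : topologicalType) (f : A -> B).

Lemma lifts_mmap_surjective : lifts f mmap -> forall y, exists x, f x = y.
Proof.
move=> H y; pose inim z := `[< exists x, f x = z >] : antidisc.
have [|d [_ _ md]] := H (fun _ => tt) inim (@cst_continuous _ _ _)
    (@antidisc_continuous _ _).
  by apply/funext => x; apply/esym/asboolP; exists x.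
by have /esym /asboolP := congr1 (@^~ y) md.
Qed.

Lemma lifts_tau_open (V : set B) : lifts f tau -> open (f @^-1` V) -> open V.
Proof.
move=> H oV.
have [//|d [dc _ taud]] := H _ (fun y => `[< V y >] : antidisc)
  (sierp_indicator_continuous oV) (@antidisc_continuous _ _).
suff -> : V = d @^-1` [set true].
  by apply: (continuousP _).1 dc _ _; apply/sierp_openE; exact: Or32.
apply/seteqP; split=> y; have := congr1 (@^~ y) taud; rewrite /= /tau => ->.
- by move=> Vy; apply/asboolP.
- by move/asboolP.
Qed.

Lemma lifts_mmap_tau_quotient_map :
  continuous f -> lifts f mmap -> lifts f tau -> quotient_map f.
Proof.
move=> fc Hm Ht; split=> //; first exact: lifts_mmap_surjective.
move=> V; split; first exact: (continuousP _).1 fc V.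
exact: lifts_tau_open.
Qed.

Lemma lorth_quotient_mapE (P : mclass) :
  P _ _ mmap -> P _ _ tau -> (forall C D g, P C D g -> injective g) ->
  lorth P A B f <-> quotient_map f.
Proof.
move=> Pm Ptau Pinj; split=> [[fc H] | qf].
- by apply: lifts_mmap_tau_quotient_map; [| exact: H | exact: H].
- split=> [|C D g /Pinj]; first by case: qf.
  exact: quotient_map_lifts.
Qed.

Lemma lorth_continuous_injectionsE (P : mclass) :
  (forall C D g, P C D g <-> continuous g /\ injective g) ->
  lorth P A B f <-> quotient_map f.
Proof.
move=> PE; apply: lorth_quotient_mapE => [||C D g /PE []//].
- by apply/PE; split; [exact: cst_continuous | exact: mmap_injective].
- by apply/PE; split; [exact: antidisc_continuous | exact: tau_injective].
Qed.

End LiftingAgainstMmapTau.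

Lemma rorth_qmapE (C D : topologicalType) (g : C -> D) :
  rorth (sing qmap) C D g <-> continuous g /\ injective g.
Proof. by rewrite rorth_singE lifts_qmapE. Qed.

Lemma lorth_iota_inhabited (C D : topologicalType) (g : C -> D) :
  continuous g -> inhabited C -> lorth (sing iotamap) C D g.
Proof. by move=> gc [c0]; apply/lorth_singE; split=> // t; case: (t c0). Qed.

Lemma rorth_self_retraction (P : mclass) (C D : topologicalType) (g : C -> D) :
  P C D g -> rorth P C D g -> exists r : D -> C, continuous r /\ r \o g = id.
Proof.
move=> Pg [_ H].
have [d [dc dg _]] := H _ _ _ Pg id id (@continuous_idfun _) (@continuous_idfun _) erefl.
by exists d.
Qed.

Lemma rorth_section (P : mclass) (C D : topologicalType) (g : C -> D) :
  P emptysp D (of_void D) -> rorth P C D g ->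
  exists s : D -> C, continuous s /\ g \o s = id.
Proof.
move=> Pv [_ H].
have [|s [sc _ gs]] := H _ _ _ Pv (of_void C) id
  (@discrete_topology_continuous _ _ _) (@continuous_idfun _).
  by apply/funext => -[].
by exists s.
Qed.

Lemma of_void_rorth_lorth_iota (D : topologicalType) :
  rorth (lorth (sing iotamap)) emptysp D (of_void D).
Proof.
split=> [|X Y h /lorth_singE [_ hiota] t b tc _ _].
  exact: discrete_topology_continuous.
have [|d [dc _ _]] := hiota t (fun _ => tt) tc (@cst_continuous _ _ _).
- by apply/funext => x; case: (t x).
- by exists d; split=> //; apply/funext => z; [case: (t z) | case: (d z)].
Qed.

Lemma qmap_rorth_rorth_lorth_iota :
  rorth (rorth (lorth (sing iotamap))) _ _ qmap.
Proof.
split=> [|C D g gP t b tc _ _]; first exact: discrete_topology_continuous.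
have [[c0] | C0] := pselect (inhabited C).
- have [r [rc rg]] := rorth_self_retraction
    (lorth_iota_inhabited gP.1 (inhabits c0)) gP.
  exists (t \o r); split; first exact: continuous_compose.
  + by rewrite -compA rg.
  + by apply/funext => y; case: (b y).
- exists (fun _ => true); split; first exact: cst_continuous.
  + by apply/funext => c; case: C0; exists.
  + by apply/funext => y; case: (b y).
Qed.

Lemma rorth3_lorth_iotaE (C D : topologicalType) (g : C -> D) :
  rorth (rorth (rorth (lorth (sing iotamap)))) C D g <->
  continuous g /\ injective g.
Proof.
split=> [[gc H] | [gc ginj]].
- by split=> //; apply/lifts_qmapE; apply: H; exact: qmap_rorth_rorth_lorth_iota.
- split=> // A B f /(rorth_section (of_void_rorth_lorth_iota B)) [s [sc fs]].
  exact: section_lifts sc fs ginj.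
Qed.

Theorem mainTheorem18 :
  forall (A B : topologicalType) (f : A -> B),
    (lorth (rorth (rorth (rorth (lorth (sing iotamap))))) A B f
       <-> lorth (union2 (sing mmap) (sing tau)) A B f)
    /\ (lorth (union2 (sing mmap) (sing tau)) A B f
       <-> lorth (rorth (sing qmap)) A B f)
    /\ (lorth (rorth (sing qmap)) A B f <-> quotient_map f).
Proof.
move=> A B f.
have chainE := lorth_continuous_injectionsE f rorth3_lorth_iotaE.
have qE := lorth_continuous_injectionsE f rorth_qmapE.
have mtauE : lorth (union2 (sing mmap) (sing tau)) A B f <-> quotient_map f.
  apply: lorth_quotient_mapE => [||C D g [|]]; [by left | by right | |].
  + exact: (singW (P := fun _ _ g => injective g) mmap_injective).
  + exact: (singW (P := fun _ _ g => injective g) tau_injective).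
by rewrite chainE mtauE qE.
Qed.
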